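(* $\mathrm{1DPD}\not\subseteq\mathrm{1N}$.
   Context: A family of promise decision problems over a fixed alphabet $\Sigma$ is $\mathcal{L}=\{(L^{(+)}_n,L^{(-)}_n)\}_{n\in\mathbb{N}}$ with $L^{(+)}_n,L^{(-)}_n\subseteq\Sigma^*$ disjoint; a family of machines $\{M_n\}_n$ solves it if each $M_n$ accepts every $x\in L^{(+)}_n$ and rejects every $x\in L^{(-)}_n$ (no uniformity is required). A 1dpda is a one-way deterministic pushdown automaton with state set $Q$, endmarked input, stack alphabet $\Gamma$ and push size $e$ (each move replaces the top stack symbol by a string in $\Gamma^{\le e}$), with accepting and rejecting halting states; its stack-state complexity is $|Q|+|\Gamma^{\le e}|$. $\mathrm{1DPD}$ is the class of families of promise problems solvable by families of 1dpda's whose stack-state complexity is bounded by a fixed polynomial in $n$. $\mathrm{1N}$ is the class of families of promise problems solvable by families of one-way nondeterministic finite automata whose number of states is bounded by a fixed polynomial in $n$. *)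

From mathcomp Require Import all_boot.
Set Implicit Arguments. Unset Strict Implicit. Unset Printing Implicit Defensive.

(* Tape symbols of an endmarked input  ¢ x $  over the alphabet S. *)
Inductive tsym (S : Type) := Cent | Dollar | Sym of S.
Arguments Cent {S}. Arguments Dollar {S}.

Definition endmarked (S : Type) (x : seq S) : seq (tsym S) :=
  Cent :: map (@Sym S) x ++ [:: Dollar].

(* A move in state q with top stack symbol Z is either a lambda-move    *)
(* (no input read) or, exclusively, an input-reading move defined for   *)
(* every tape symbol; this enforces determinism.  Each move replaces    *)
(* the top stack symbol by a string w (w's head becomes the new top).   *)
Inductive dmove (Q G S : Type) :=
  | Lam of Q & seq G
  | Rd of (tsym S -> Q * seq G).

Definition move_push_ok (Q G S : Type) (e : nat) (m : dmove Q G S) : Prop :=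
  match m with
  | Lam _ w => size w <= e
  | Rd f => forall a, size (f a).2 <= e
  end.

Record dpda (S : Type) := Dpda {
  dQ : finType;
  dG : finType;
  de : nat;
  dq0 : dQ;
  dZ0 : dG;
  dacc : dQ;
  drej : dQ;
  dacc_rej : dacc != drej;
  ddelta : dQ -> dG -> dmove dQ dG S;
  dpush : forall q Z, move_push_ok de (ddelta q Z)
}.

Definition ssc (S : Type) (M : dpda S) : nat :=
  #|dQ M| + \sum_(i < (de M).+1) #|dG M| ^ i.

Definition dconfig (S : Type) (M : dpda S) : Type :=
  (dQ M * seq (tsym S) * seq (dG M))%type.

(* one computation step; None = no further move (halted or stuck) *)
Definition dstep (S : Type) (M : dpda S) (c : dconfig M) : option (dconfig M) :=
  let: (q, inp, stk) := c in
  if (q == dacc M) || (q == drej M) then None else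
  match stk with
  | [::] => None
  | Z :: rest =>
      match ddelta q Z with
      | Lam q' w => Some (q', inp, w ++ rest)
      | Rd f =>
          match inp with
          | [::] => None
          | a :: inp' => let: (q', w) := f a in Some (q', inp', w ++ rest)
          end
      end
  end.

Definition dinit (S : Type) (M : dpda S) (x : seq S) : dconfig M :=
  (dq0 M, endmarked x, [:: dZ0 M]).

Definition drun (S : Type) (M : dpda S) (x : seq S) (k : nat) : option (dconfig M) :=
  iter k (fun oc => obind (@dstep S M) oc) (Some (dinit M x)).

Definition dpda_accepts (S : Type) (M : dpda S) (x : seq S) : Prop :=
  exists k inp stk, drun M x k = Some (dacc M, inp, stk).

Definition dpda_rejects (S : Type) (M : dpda S) (x : seq S) : Prop :=
  exists k inp stk, drun M x k = Some (drej M, inp, stk).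

Record nfa (S : Type) := Nfa {
  nQ : finType;
  nq0 : nQ;
  ndelta : nQ -> tsym S -> {set nQ};
  nfin : {set nQ}
}.

Definition nfa_reach (S : Type) (N : nfa S) (w : seq (tsym S)) : {set nQ N} :=
  foldl (fun (A : {set nQ N}) a => \bigcup_(q in A) ndelta q a) [set nq0 N] w.

Definition nfa_accepts (S : Type) (N : nfa S) (x : seq S) : Prop :=
  [exists q in nfa_reach N (endmarked x), q \in nfin N].

Definition nfa_rejects (S : Type) (N : nfa S) (x : seq S) : Prop :=
  ~ nfa_accepts N x.

Definition promise_family (S : Type) (Lp Lm : nat -> seq S -> Prop) : Prop :=
  forall n x, Lp n x -> Lm n x -> False.

Definition in_1DPD (S : Type) (Lp Lm : nat -> seq S -> Prop) : Prop :=
  exists (M : nat -> dpda S) (c k : nat),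
    (forall n, ssc (M n) <= c * n ^ k + c) /\
    (forall n x, Lp n x -> dpda_accepts (M n) x) /\
    (forall n x, Lm n x -> dpda_rejects (M n) x).

Definition in_1N (S : Type) (Lp Lm : nat -> seq S -> Prop) : Prop :=
  exists (N : nat -> nfa S) (c k : nat),
    (forall n, #|nQ (N n)| <= c * n ^ k + c) /\
    (forall n x, Lp n x -> nfa_accepts (N n) x) /\
    (forall n x, Lm n x -> nfa_rejects (N n) x).

From mathcomp Require Import all_boot zify.
Set Implicit Arguments. Unset Strict Implicit. Unset Printing Implicit Defensive.

(* The witness is the constant family separating the words 0^m 1^m from the
   words 0^i 1^j with i <> j.  A one-counter 1dpda of constant size solves it:
   it pushes a marker for each 0, pops one for each 1, and inspects the top of
   the stack at the right endmarker.  No 1nfa of any size solves it, by a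
   fooling-set argument: on the accepting runs for 0^m 1^m, m <= |Q|, two of
   the states reached after the prefix 0^m must coincide, say for i <> j, and
   splicing the two runs gives an accepting run on 0^i 1^j. *)

Definition blocks (i j : nat) : seq bool := nseq i false ++ nseq j true.

Definition equal_blocks (n : nat) (x : seq bool) : Prop :=
  exists m, x = blocks m m.

Definition unequal_blocks (n : nat) (x : seq bool) : Prop :=
  exists i j, i != j /\ x = blocks i j.

Lemma blocks_inj i j i' j' : blocks i j = blocks i' j' -> i = i' /\ j = j'.
Proof.
move=> eq_blocks.
have := congr1 (count (pred1 false)) eq_blocks.
have := congr1 (count (pred1 true)) eq_blocks.
by rewrite !count_cat !count_nseq /=; lia.
Qed.

Lemma promise_blocks : promise_family equal_blocks unequal_blocks.
Proof.
move=> n x [m ->] [i [j [neq_ij /blocks_inj [eq_mi eq_mj]]]].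
by rewrite -eq_mi -eq_mj eqxx in neq_ij.
Qed.

Lemma endmarked_blocks i j :
  endmarked (blocks i j) =
  (Cent :: map (@Sym bool) (nseq i false)) ++ map (@Sym bool) (nseq j true) ++ [:: Dollar].
Proof. by rewrite /endmarked map_cat -catA. Qed.

Section DpdaSteps.
Variables (S : Type) (M : dpda S).

Definition dsteps (k : nat) : option (dconfig M) -> option (dconfig M) :=
  iter k (obind (@dstep S M)).

Lemma dstepsD k1 k2 c : dsteps (k1 + k2) c = dsteps k1 (dsteps k2 c).
Proof. exact: iterD. Qed.

Lemma drunE x k : drun M x k = dsteps k (Some (dinit M x)).
Proof. by []. Qed.

End DpdaSteps.

Arguments dsteps {S} M k.

(* States: [None] is the working state, [Some b] halts with answer [b].
   Stack symbols: [false] is the bottom marker, [true] counts a 0. *)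
Definition counter_move (Z : bool) (a : tsym bool) : option bool * seq bool :=
  match a with
  | Cent => (None, [:: Z])
  | Sym false => (None, [:: true; Z])
  | Sym true => if Z then (None, [::]) else (Some false, [:: Z])
  | Dollar => (Some (~~ Z), [:: Z])
  end.

Definition counter_delta (q : option bool) (Z : bool) : dmove (option bool) bool bool :=
  Rd (counter_move Z).

Lemma counter_push_ok q Z : move_push_ok 2 (counter_delta q Z).
Proof. by move=> [| | [] ]; case: Z. Qed.

Definition counter : dpda bool :=
  @Dpda bool (option bool) bool 2 None false (Some true) (Some false) isT
    counter_delta counter_push_ok.

Lemma ssc_counter : ssc counter = 10.
Proof. by rewrite /ssc /= card_option card_bool !big_ord_recr big_ord0. Qed.

Lemma counter_push i r Z stk :
  dsteps counter i (Some (None, map (@Sym bool) (nseq i false) ++ r, Z :: stk))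
  = Some (None, r, nseq i true ++ Z :: stk).
Proof.
elim: i Z stk => [//|i IHi] Z stk.
rewrite /dsteps iterSr /= [iter _ _ _]IHi; congr (Some (_, _, _)).
by elim: (i) => //= k ->.
Qed.

Lemma counter_pop i r stk :
  dsteps counter i (Some (None, map (@Sym bool) (nseq i true) ++ r, nseq i true ++ stk))
  = Some (None, r, stk).
Proof. by elim: i => [//|i IHi]; rewrite /dsteps iterSr. Qed.

Lemma counter_read_zeros i j :
  drun counter (blocks i j) (i + 1)
  = Some (None, map (@Sym bool) (nseq j true) ++ [:: Dollar], nseq i true ++ [:: false]).
Proof. by rewrite drunE dstepsD /dinit endmarked_blocks counter_push. Qed.

Lemma counter_decides i j :
  exists k inp stk, drun counter (blocks i j) k = Some (Some (i == j), inp, stk).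
Proof.
case: (leqP j i) => [le_ji | lt_ij].
- have [d ->] : exists d, i = j + d by exists (i - j); lia.
  exists (1 + (j + (j + d + 1))), [::], (nseq d true ++ [:: false]).
  rewrite drunE (dstepsD 1) (dstepsD j) -drunE counter_read_zeros nseqD -catA.
  rewrite [dsteps _ j _]counter_pop.
  by case: d => [|d]; rewrite ?addn0 ?eqxx // -{2}[j]addn0 eqn_add2l.
- have [d ->] : exists d, j = i + d.+1 by exists (j - i).-1; lia.
  exists (1 + (i + (i + 1))), (map (@Sym bool) (nseq d true) ++ [:: Dollar]), [:: false].
  rewrite drunE (dstepsD 1) (dstepsD i) -drunE counter_read_zeros nseqD map_cat -catA.
  by rewrite [dsteps _ i _]counter_pop -{1}[i]addn0 eqn_add2l.
Qed.

Lemma blocks_in_1DPD : in_1DPD equal_blocks unequal_blocks.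
Proof.
exists (fun=> counter), 10, 0; split; [|split].
- by move=> n; rewrite ssc_counter.
- by move=> n x [m ->]; have := counter_decides m m; rewrite eqxx.
- by move=> n x [i [j [/negbTE neq_ij ->]]]; have := counter_decides i j; rewrite neq_ij.
Qed.

Section NfaRuns.
Variables (S : Type) (N : nfa S).

Definition nfa_run (A : {set nQ N}) (w : seq (tsym S)) : {set nQ N} :=
  foldl (fun (B : {set nQ N}) a => \bigcup_(q in B) ndelta q a) A w.

Lemma nfa_run_cat (A : {set nQ N}) u v : nfa_run A (u ++ v) = nfa_run (nfa_run A u) v.
Proof. exact: foldl_cat. Qed.

Lemma nfa_run_subset w (A B : {set nQ N}) : A \subset B -> nfa_run A w \subset nfa_run B w.
Proof.
elim: w A B => [//|a w IHw] A B sub_AB /=; apply: IHw.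
by apply/subsetP => q /bigcupP [p pA qp]; apply/bigcupP; exists p => //; apply: (subsetP sub_AB).
Qed.

Lemma mem_nfa_run w (A : {set nQ N}) q :
  q \in nfa_run A w -> exists2 p, p \in A & q \in nfa_run [set p] w.
Proof.
elim: w A q => [|a w IHw] A q /=; first by exists q; rewrite ?inE.
case/IHw => r /bigcupP [p pA rp] q_r; exists p => //.
apply: subsetP q_r; apply: nfa_run_subset; rewrite sub1set.
by apply/bigcupP; exists p; rewrite ?inE.
Qed.

Definition nfa_accepts_from (A : {set nQ N}) (w : seq (tsym S)) : bool :=
  [exists q in nfa_run A w, q \in nfin N].

Lemma nfa_accepts_cat (A : {set nQ N}) u v :
  nfa_accepts_from A (u ++ v) =
  [exists p in nfa_run A u, nfa_accepts_from [set p] v].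
Proof.
apply/exists_inP/exists_inP => [[q] | [p p_u /exists_inP [q q_v q_fin]]].
- rewrite nfa_run_cat => /mem_nfa_run [p p_u q_v] q_fin.
  by exists p => //; apply/exists_inP; exists q.
- exists q => //; rewrite nfa_run_cat.
  by apply: subsetP q_v; apply: nfa_run_subset; rewrite sub1set.
Qed.

Lemma nfa_fooling_pair (A : {set nQ N}) (u v : nat -> seq (tsym S)) :
  (forall m, nfa_accepts_from A (u m ++ v m)) ->
  exists i j, i != j /\ nfa_accepts_from A (u i ++ v j).
Proof.
move=> acc_uv.
pose mid m p := (p \in nfa_run A (u m)) && nfa_accepts_from [set p] (v m).
have ex_mid m : exists p, mid m p.
  by have := acc_uv m; rewrite nfa_accepts_cat => /exists_inP [p]; exists p; apply/andP.
pose f (m : 'I_#|nQ N|.+1) := xchoose (ex_mid m).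
have /injectivePn [i [j neq_ij eq_f]] : ~~ injectiveb f.
  by apply/injectiveP => /leq_card; rewrite card_ord ltnn.
exists (val i), (val j); split=> //; rewrite nfa_accepts_cat; apply/exists_inP; exists (f i).
- by case/andP: (xchooseP (ex_mid i)).
- by rewrite eq_f; case/andP: (xchooseP (ex_mid j)).
Qed.

End NfaRuns.

Lemma blocks_not_in_1N : ~ in_1N equal_blocks unequal_blocks.
Proof.
case=> N [c [k [_ [acc rej]]]].
pose u m := Cent :: map (@Sym bool) (nseq m false).
pose v m := map (@Sym bool) (nseq m true) ++ [:: Dollar].
have [|i [j [neq_ij acc_ij]]] := @nfa_fooling_pair _ (N 0) [set nq0 (N 0)] u v.
  by move=> m; rewrite -endmarked_blocks; apply: acc; exists m.
by apply: (rej 0 (blocks i j)); [exists i, j | rewrite /nfa_accepts endmarked_blocks].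
Qed.

Theorem proposition5p1 :
  exists (S : finType) (Lp Lm : nat -> seq S -> Prop),
    promise_family Lp Lm /\ in_1DPD Lp Lm /\ ~ in_1N Lp Lm.
Proof.
exists bool, equal_blocks, unequal_blocks.
split; [exact: promise_blocks | split; [exact: blocks_in_1DPD | exact: blocks_not_in_1N]].
Qed.
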